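(* Let $\mathfrak{S}=(\mathcal{X},\mathsf{S},\gamma,(\Lambda_{a})_{a\in\mathcal{A}})$ be a spectral decomposition system for the Euclidean space $\mathfrak{H}$. Let $m\geq 1$ be an integer, let $(X_i)_{1\leq i\leq m}$ be a family in $\mathfrak{H}$, and let $(\alpha_i)_{1\leq i\leq m}$ be a family in $[0,+\infty)$. Then \[ \gamma\Big(\sum_{i=1}^m\alpha_iX_i\Big)\in\operatorname{conv}\Big(\mathsf{S}\cdot\sum_{i=1}^m\alpha_i\gamma(X_i)\Big). \]
   Context: A Euclidean space is a finite-dimensional real inner product space; inner products are written $\langle\cdot,\cdot\rangle$ and norms $\|\cdot\|$. Let $\mathfrak{H}$ and $\mathcal{X}$ be Euclidean spaces, let $\mathsf{S}$ be a group acting on $\mathcal{X}$ by linear isometries (for every $s\in\mathsf{S}$, the map $x\mapsto s\cdot x$ is a linear isometry of $\mathcal{X}$), let $\gamma\colon\mathfrak{H}\to\mathcal{X}$, and let $(\Lambda_a)_{a\in\mathcal{A}}$ be a family of linear operators from $\mathcal{X}$ to $\mathfrak{H}$. The orbit of $x\in\mathcal{X}$ is $\mathsf{S}\cdot x=\{s\cdot x: s\in\mathsf{S}\}$; a map $\tau$ on $\mathcal{X}$ is $\mathsf{S}$-invariant if $\tau(s\cdot x)=\tau(x)$ for all $s,x$. The tuple $(\mathcal{X},\mathsf{S},\gamma,(\Lambda_a)_{a\in\mathcal{A}})$ is a spectral decomposition system for $\mathfrak{H}$ if: [A] every $\Lambda_a$ is an isometry; [B] there exists an $\mathsf{S}$-invariant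 map $\tau\colon\mathcal{X}\to\mathcal{X}$ with $\tau(x)\in\mathsf{S}\cdot x$ for all $x\in\mathcal{X}$ and $\gamma\circ\Lambda_a=\tau$ for all $a\in\mathcal{A}$; [C] for every $X\in\mathfrak{H}$ there is $a\in\mathcal{A}$ with $X=\Lambda_a\gamma(X)$; [D] $\langle X,Y\rangle\leq\langle\gamma(X),\gamma(Y)\rangle$ for all $X,Y\in\mathfrak{H}$. $\operatorname{conv}$ denotes convex hull. *)

(* Euclidean spaces are modelled as coordinate spaces
   'rV[R]_n (R : realType) with the standard inner product. *)
From HB Require Import structures.
From mathcomp Require Import all_boot all_order all_algebra.
From mathcomp Require Import reals.
Set Implicit Arguments. Unset Strict Implicit. Unset Printing Implicit Defensive.
Import Order.TTheory GRing.Theory Num.Theory.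
Local Open Scope ring_scope.

Section Defs.
Variable R : realType.

Definition dotp (n : nat) (u v : 'rV[R]_n) : R := (u *m v^T) 0 0.

Definition is_linear_map (p n : nat) (f : 'rV[R]_p -> 'rV[R]_n) : Prop :=
  forall (a : R) (u v : 'rV[R]_p), f (a *: u + v) = a *: f u + f v.

Definition is_linear_isometry (p n : nat) (f : 'rV[R]_p -> 'rV[R]_n) : Prop :=
  is_linear_map f /\ forall x, dotp (f x) (f x) = dotp x x.

Definition is_group (G : Type) (mul : G -> G -> G) (one : G) (inv : G -> G)
  : Prop :=
  [/\ forall a b c, mul a (mul b c) = mul (mul a b) c,
      forall a, mul one a = a, forall a, mul a one = a,
      forall a, mul (inv a) a = one & forall a, mul a (inv a) = one].

Definition is_isometric_action (G : Type) (mul : G -> G -> G) (one : G)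
  (p : nat) (act : G -> 'rV[R]_p -> 'rV[R]_p) : Prop :=
  [/\ forall x, act one x = x,
      forall s t x, act (mul s t) x = act s (act t x)
    & forall s, is_linear_isometry (act s)].

Definition sorbit (G : Type) (p : nat) (act : G -> 'rV[R]_p -> 'rV[R]_p)
  (x : 'rV[R]_p) : 'rV[R]_p -> Prop := fun y => exists s, y = act s x.

Definition conv (p : nat) (A : 'rV[R]_p -> Prop) : 'rV[R]_p -> Prop :=
  fun x => exists (k : nat) (w : 'I_k -> R) (y : 'I_k -> 'rV[R]_p),
    [/\ forall i, 0 <= w i, \sum_(i < k) w i = 1, forall i, A (y i)
      & x = \sum_(i < k) w i *: y i].

Definition spectral_decomposition_system (n p : nat) (G : Type)
  (mul : G -> G -> G) (one : G) (inv : G -> G)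
  (act : G -> 'rV[R]_p -> 'rV[R]_p) (gamma : 'rV[R]_n -> 'rV[R]_p)
  (A : Type) (Lambda : A -> 'rV[R]_p -> 'rV[R]_n) : Prop :=
  [/\ is_group mul one inv,
      is_isometric_action mul one act,
      forall a, is_linear_map (Lambda a)
    & [/\ (* [A] *) forall a, is_linear_isometry (Lambda a),
      (* [B] *) exists tau : 'rV[R]_p -> 'rV[R]_p,
          [/\ forall s x, tau (act s x) = tau x,
              forall x, sorbit act x (tau x)
            & forall a x, gamma (Lambda a x) = tau x],
      (* [C] *) forall X, exists a, X = Lambda a (gamma X)
    & (* [D] *) forall X Y, dotp X Y <= dotp (gamma X) (gamma Y)]].

End Defs.

From HB Require Import structures.
From mathcomp Require Import all_boot all_order all_algebra.
From mathcomp Require Import reals.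
From mathcomp Require Import ring lra.
From mathcomp Require Import boolp classical_sets topology normedtype derive.
Import Order.TTheory GRing.Theory Num.Theory.
Import numFieldTopology.Exports numFieldNormedType.Exports.
Local Open Scope classical_set_scope.
Local Open Scope ring_scope.
Set Implicit Arguments. Unset Strict Implicit. Unset Printing Implicit Defensive.

(* The point y := gamma (sum_i alpha_i X_i) satisfies, for every direction w,
   <y, w> <= <z, tau w> = <s . z, w> for some s, where z := sum_i alpha_i gamma X_i:
   write sum_i alpha_i X_i = Lambda_a y by [C], move Lambda_a across the inner product
   by [A], and bound each term by [D] and [B].  So y lies below the support function of
   the orbit S . z in every direction.  The orbit is compact (it is the intersection of
   a sphere with the half-spaces <., u> <= <tau z, tau u>), hence by Caratheodory so
   is its convex hull, and the nearest point of the hull to y cannot be separated from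
   y; therefore it is y. *)

Section InnerProduct.
Variables (R : realType) (n : nat).
Implicit Types u v w : 'rV[R]_n.

Lemma dotpE u v : dotp u v = \sum_j u ord0 j * v ord0 j.
Proof. by rewrite /dotp mxE; apply: eq_bigr => j _; rewrite mxE. Qed.

Lemma dotpC u v : dotp u v = dotp v u.
Proof. by rewrite !dotpE; apply: eq_bigr => j _; rewrite mulrC. Qed.

Lemma dotpDl u v w : dotp (u + v) w = dotp u w + dotp v w.
Proof. by rewrite /dotp mulmxDl mxE. Qed.

Lemma dotpZl a u v : dotp (a *: u) v = a * dotp u v.
Proof. by rewrite /dotp -scalemxAl mxE. Qed.

Lemma dotpBl u v w : dotp (u - v) w = dotp u w - dotp v w.
Proof. by rewrite dotpDl -scaleN1r dotpZl mulN1r. Qed.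

Lemma dotpDr u v w : dotp w (u + v) = dotp w u + dotp w v.
Proof. by rewrite !(dotpC w) dotpDl. Qed.

Lemma dotpZr a u v : dotp v (a *: u) = a * dotp v u.
Proof. by rewrite !(dotpC v) dotpZl. Qed.

Lemma dotpBr u v w : dotp w (u - v) = dotp w u - dotp w v.
Proof. by rewrite !(dotpC w) dotpBl. Qed.

Lemma dotp_suml (I : Type) (r : seq I) (P : pred I) (F : I -> 'rV[R]_n) v :
  dotp (\sum_(i <- r | P i) F i) v = \sum_(i <- r | P i) dotp (F i) v.
Proof. by rewrite /dotp mulmx_suml summxE. Qed.

Lemma sqr_coord_le_dotp u j : u ord0 j ^+ 2 <= dotp u u.
Proof.
rewrite dotpE (bigD1 j) //= -expr2 lerDl.
by apply: sumr_ge0 => i _; rewrite -expr2 sqr_ge0.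
Qed.

Lemma dotp_le0 u : dotp u u <= 0 -> u = 0.
Proof.
move=> u_le0; apply/rowP => j; rewrite mxE; apply/eqP.
by rewrite -sqrf_eq0 eq_le sqr_ge0 andbT (le_trans (sqr_coord_le_dotp u j)).
Qed.

End InnerProduct.

Lemma linear_isometry_dotp (R : realType) (p n : nat) (f : 'rV[R]_p -> 'rV[R]_n) :
  is_linear_isometry f -> forall u v, dotp (f u) (f v) = dotp u v.
Proof.
move=> [f_lin f_norm] u v.
have fD : f (u + v) = f u + f v by have := f_lin 1 u v; rewrite !scale1r.
have := f_norm (u + v); rewrite fD !dotpDl !dotpDr !f_norm (dotpC (f v)) (dotpC v).
by move=> e; lra.
Qed.

Section IsometricAction.
Variables (R : realType) (G : Type) (mul : G -> G -> G) (one : G) (inv : G -> G).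
Variables (p : nat) (act : G -> 'rV[R]_p -> 'rV[R]_p).
Hypotheses (hG : is_group mul one inv) (hact : is_isometric_action mul one act).

Lemma act_invK s x : act (inv s) (act s x) = x.
Proof. by case: hG => _ _ _ mulVg _; case: hact => act1 actM _; rewrite -actM mulVg act1. Qed.

Lemma act_dotp s x y : dotp (act s x) (act s y) = dotp x y.
Proof. by case: hact => _ _ /(_ s) /linear_isometry_dotp. Qed.

Lemma dotp_act_inv s x y : dotp x (act s y) = dotp (act (inv s) x) y.
Proof. by rewrite -(act_dotp (inv s) x) act_invK. Qed.

Lemma sorbit_refl x : sorbit act x x.
Proof. by exists one; case: hact => act1 _ _; rewrite act1. Qed.

Lemma sorbit_sym x y : sorbit act x y -> sorbit act y x.
Proof. by move=> [s ->]; exists (inv s); rewrite act_invK. Qed.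

Lemma sorbit_trans x y z : sorbit act x y -> sorbit act y z -> sorbit act x z.
Proof. by case: hact => _ actM _ [s ->] [t ->]; exists (mul t s); rewrite actM. Qed.

Lemma sorbit_dotp x y : sorbit act x y -> dotp y y = dotp x x.
Proof. by move=> [s ->]; rewrite act_dotp. Qed.

End IsometricAction.

Section Topology.
Variable R : realType.

Lemma mx_entry_continuous (T : topologicalType) m n i j :
  continuous (fun M : 'M[T]_(m, n) => M i j).
Proof.
move=> M B /= MB.
exists (fun k l => if (k == i) && (l == j) then B else setT) => [k l | N NB].
  by case: ifP => [/andP [/eqP -> /eqP ->] // | _]; exact: filterT.
by have := NB i j; rewrite !eqxx.
Qed.

Lemma continuous_sum (T : topologicalType) (V : normedModType R) (I : Type)
    (r : seq I) (f : I -> T -> V) :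
  (forall i, continuous (f i)) -> continuous (fun x => \sum_(i <- r) f i x).
Proof.
move=> f_cont; elim: r => [|i r IHr] x.
  under eq_fun do rewrite big_nil; exact: cst_continuous.
under eq_fun do rewrite big_cons; exact: continuousD (f_cont i x) (IHr x).
Qed.

Lemma continuous_dotp (T : topologicalType) p (f g : T -> 'rV[R]_p) :
  continuous f -> continuous g -> continuous (fun x => dotp (f x) (g x)).
Proof.
move=> f_cont g_cont; under eq_fun do rewrite dotpE.
have coord j : continuous (fun v : 'rV[R]_p => v ord0 j) by exact: mx_entry_continuous.
apply: continuous_sum => j x; apply: continuousM.
- exact: (continuous_comp (f_cont x) (coord j (f x))).
- exact: (continuous_comp (g_cont x) (coord j (g x))).
Qed.

Lemma closed_dotp_bounded_compact p (K : set 'rV[R]_p) r :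
  closed K -> (forall k, K k -> dotp k k <= r) -> compact K.
Proof.
move=> K_closed K_bounded.
pose box := [set v : 'rV[R]_p | forall j, `[- (r + 1), r + 1]%classic (v ord0 j)].
have box_compact : compact box.
  exact: (@rV_compact _ p (fun=> `[- (r + 1), r + 1]%classic) (fun=> @segment_compact R _ _)).
apply: (subclosed_compact K_closed box_compact).
move=> k Kk j /=; rewrite in_itv /=.
have := le_trans (sqr_coord_le_dotp k j) (K_bounded k Kk).
by move=> kj; apply/andP; split; nra.
Qed.

Lemma compact_nearest_point p (C : set 'rV[R]_p) y :
  compact C -> C !=set0 ->
  exists2 c, C c & forall x, C x -> dotp (y - c) (y - c) <= dotp (y - x) (y - x).
Proof.
move=> C_compact C_ne.
have dist_cont : continuous (fun x : 'rV[R]_p => dotp (y - x) (y - x)).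
  have yB : continuous (fun x : 'rV[R]_p => y - x).
    by move=> x; apply: continuousB; [exact: cst_continuous | exact: cvg_id].
  exact: continuous_dotp.
have [c /set_mem Cc c_min] := compact_EVT_min C_ne C_compact (continuous_subspaceT dist_cont).
by exists c => // x Cx; apply: c_min; exact: mem_set.
Qed.

End Topology.

Lemma le0_of_le_scaled (R : realType) (a b : R) :
  (forall t, 0 < t <= 1 -> a <= t * b) -> a <= 0.
Proof.
move=> le_ab; rewrite leNgt; apply/negP => a_gt0.
have a_le_b : a <= b by rewrite -[b]mul1r le_ab // ltr01 lexx.
have b_gt0 : 0 < b := lt_le_trans a_gt0 a_le_b.
have t_gt0 : 0 < a / (2 * b) by rewrite divr_gt0 ?mulr_gt0.
have t_le1 : a / (2 * b) <= 1 by rewrite ler_pdivrMr ?mulr_gt0 // mul1r; lra.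
have := le_ab _ (introT andP (conj t_gt0 t_le1)).
have -> : a / (2 * b) * b = a / 2 by field; rewrite gt_eqF.
lra.
Qed.

Section ConvexCombinations.
Variables (R : realType) (p : nat).
Implicit Types (K : set 'rV[R]_p) (x y : 'rV[R]_p).

Definition convn K k x :=
  exists (w : 'I_k -> R) (v : 'I_k -> 'rV[R]_p),
    [/\ forall i, 0 <= w i, \sum_(i < k) w i = 1, forall i, K (v i)
      & x = \sum_(i < k) w i *: v i].

Lemma affine_dependence (v : 'I_p.+2 -> 'rV[R]_p) :
  exists mu : 'I_p.+2 -> R,
    [/\ \sum_i mu i = 0, \sum_i mu i *: v i = 0 & exists i, 0 < mu i].
Proof.
(* The p.+2 rows of M lie in a space of dimension p.+1. *)
pose M := row_mx (\matrix_(i, j) v i ord0 j) (const_mx 1 : 'M[R]_(p.+2, 1)).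
have [i0 mu_neq0] : exists i, row i (kermx M) != 0.
  have M_not_free : ~~ row_free M.
    by apply/negP => /eqP rkM; have := rank_leq_col M; rewrite rkM addn1 ltnn.
  apply/existsP; apply: contraR M_not_free => /existsPn ker0.
  by rewrite -kermx_eq0; apply/eqP/row_matrixP => i; rewrite row0; apply/eqP/negbNE/ker0.
set mu := row i0 (kermx M) in mu_neq0.
have : mu *m M = 0 by rewrite /mu -row_mul mulmx_ker row0.
rewrite mul_mx_row => /eqP; rewrite row_mx_eq0 => /andP [/eqP mu_v /eqP mu_1].
have mu_sum : \sum_i mu ord0 i = 0.
  have := congr1 (fun B : 'M[R]_1 => B 0 0) mu_1; rewrite /= !mxE => e.
  rewrite -[RHS]e; apply: eq_bigr => i _; by rewrite !mxE mulr1.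
exists (mu ord0); split => //.
- rewrite -[RHS]mu_v mulmx_sum_row; apply: eq_bigr => i _; congr (_ *: _).
  by apply/rowP => j; rewrite !mxE.
- apply/existsP; apply: contraR mu_neq0 => /existsPn mu_le0.
  have Nmu_ge0 i : 0 <= - mu ord0 i by rewrite oppr_ge0 leNgt mu_le0.
  have Nmu_sum : \sum_i - mu ord0 i = 0 by rewrite sumrN mu_sum oppr0.
  apply/eqP/rowP => j; rewrite [RHS]mxE (_ : 0 = ord0) //; apply: oppr_inj.
  by rewrite oppr0 (psumr_eq0P (fun i _ => Nmu_ge0 i) Nmu_sum).
Qed.

Lemma convn_caratheodory K x : convn K p.+2 x -> convn K p.+1 x.
Proof.
move=> [w [v [w_ge0 w_sum vK ->]]].
have [mu [mu_sum mu_v [i1 mu_i1_gt0]]] := affine_dependence v.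
(* Moving the weights along -mu as far as positivity allows kills the weight of i0. *)
have [i0 mu_i0_gt0 ratio_min] :=
  @arg_minP _ _ _ i1 (fun i => 0 < mu i) (fun i => w i / mu i) mu_i1_gt0.
set t := w i0 / mu i0 in ratio_min.
pose w' i := w i - t * mu i.
have w'_ge0 i : 0 <= w' i.
  rewrite subr_ge0; have [mu_i_gt0 | mu_i_le0] := ltP 0 (mu i).
    by rewrite -ler_pdivlMr // ratio_min.
  by rewrite (le_trans _ (w_ge0 i)) // mulr_ge0_le0 // divr_ge0 // ltW.
have w'_i0 : w' i0 = 0 by rewrite /w' /t divfK ?subrr // gt_eqF.
have w'_sum : \sum_i w' i = 1 by rewrite sumrB -mulr_sumr mu_sum mulr0 subr0.
have w'_v : \sum_i w i *: v i = \sum_i w' i *: v i.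
  under [RHS]eq_bigr => i _ do rewrite scalerBl -scalerA.
  by rewrite sumrB -scaler_sumr mu_v scaler0 subr0.
exists (fun j => w' (lift i0 j)), (fun j => v (lift i0 j)); split => //.
- by rewrite -w'_sum (bigD1_ord i0) //= w'_i0 add0r.
- by rewrite w'_v (bigD1_ord i0) //= w'_i0 scale0r add0r.
Qed.

Lemma convn_segment K k c u t :
  convn K k c -> K u -> 0 <= t <= 1 -> convn K k.+1 ((1 - t) *: c + t *: u).
Proof.
move=> [w [v [w_ge0 w_sum vK ->]]] Ku /andP [t_ge0 t_le1].
exists (fun i => oapp (fun j => (1 - t) * w j) t (unlift ord_max i)).
exists (fun i => oapp v u (unlift ord_max i)).
split.
- by move=> i; case: unlift => [j|] //=; rewrite mulr_ge0 ?subr_ge0.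
- rewrite (bigD1_ord ord_max) //= unlift_none.
  under eq_bigr => i _ do rewrite (@liftK k.+1 ord_max i) /=.
  by rewrite -mulr_sumr w_sum mulr1 addrC subrK.
- by move=> i; case: unlift.
- rewrite (bigD1_ord ord_max) //= unlift_none.
  under [in RHS]eq_bigr => i _ do rewrite (@liftK k.+1 ord_max i) /=.
  rewrite addrC scaler_sumr; congr (_ + _).
  by apply: eq_bigr => i _; rewrite scalerA.
Qed.

Lemma convn_compact K k : compact K -> compact (convn K k).
Proof.
move=> K_compact.
pose simplex := [set w : 'rV[R]_k | forall i, `[0, 1]%classic (w ord0 i)] `&`
                [set w | \sum_i w ord0 i = 1].
pose points := [set v : 'rV['rV[R]_p]_k | forall i, K (v ord0 i)].
pose comb (wv : 'rV[R]_k * 'rV['rV[R]_p]_k) := \sum_i wv.1 ord0 i *: wv.2 ord0 i.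
have -> : convn K k = comb @` (simplex `*` points).
  apply/seteqP; split => [_ [w [v [w_ge0 w_sum vK ->]]] | _ [[w v] [[w01 w_sum] vK] <-]].
  - exists (\row_i w i, \row_i v i); last by apply: eq_bigr => i _; rewrite !mxE.
    split; [split|] => /= [i||i]; rewrite ?mxE.
    + rewrite in_itv /= w_ge0 -w_sum (bigD1 i) //= lerDl.
      exact: sumr_ge0.
    + by under eq_bigr do rewrite mxE.
    + exact: vK.
  - exists (fun i => w ord0 i), (fun i => v ord0 i); split => // i.
    by have := w01 i; rewrite /= in_itv /= => /andP [].
have comb_cont : continuous comb.
  apply: continuous_sum => i wv; apply: continuousZ.
  - apply: (@continuous_comp _ _ _ fst (fun w : 'rV[R]_k => w ord0 i)).
      exact: cvg_fst.
    exact: mx_entry_continuous.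
  - apply: (@continuous_comp _ _ _ snd (fun v : 'rV['rV[R]_p]_k => v ord0 i)).
      exact: cvg_snd.
    exact: mx_entry_continuous.
apply: (continuous_compact (continuous_subspaceT comb_cont)).
apply: compact_setX; last exact: (@rV_compact _ k (fun=> K) (fun=> K_compact)).
apply: compact_closedI.
  exact: (@rV_compact _ k (fun=> `[0 : R, 1]%classic) (fun=> @segment_compact R 0 1)).
apply: (preimage_closed _ (@closed_eq R 1)) => w _.
by apply: continuous_sum => i; exact: mx_entry_continuous.
Qed.

Lemma nearest_point_obtuse (C : set 'rV[R]_p) y c u :
  (forall x, C x -> dotp (y - c) (y - c) <= dotp (y - x) (y - x)) ->
  (forall t, 0 < t <= 1 -> C ((1 - t) *: c + t *: u)) ->
  dotp (y - c) (u - c) <= 0.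
Proof.
move=> c_min segment_C.
suff le_scaled t : 0 < t <= 1 -> 2 * dotp (y - c) (u - c) <= t * dotp (u - c) (u - c).
  by have := le0_of_le_scaled le_scaled; lra.
move=> t01; have := c_min _ (segment_C t t01); case/andP: t01 => t_gt0 _.
have -> : y - ((1 - t) *: c + t *: u) = (y - c) - t *: (u - c).
  by apply/rowP => j; rewrite !mxE; lra.
move: (y - c) (u - c) => d e.
rewrite !dotpBl !dotpBr !dotpZl !dotpZr (dotpC e d) => le_de.
by rewrite -(ler_pM2l t_gt0); lra.
Qed.

Lemma convn_of_support K y :
  compact K -> K !=set0 ->
  (forall w, exists2 k, K k & dotp y w <= dotp k w) -> convn K p.+1 y.
Proof.
move=> K_compact [k0 Kk0] K_support.
have convn_k0 : convn K p.+1 k0.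
  exists (fun i => (i == ord0)%:R), (fun=> k0); split => [i||_|].
  - exact: ler0n.
  - by rewrite (bigD1 ord0) //= big1 ?addr0 // => i /negbTE ->.
  - exact: Kk0.
  - by rewrite (bigD1 ord0) //= big1 ?scale1r ?addr0 // => i /negbTE ->; rewrite scale0r.
have [c c_convn c_min] :=
  compact_nearest_point y (convn_compact (k := p.+1) K_compact) (ex_intro _ k0 convn_k0).
have obtuse u : K u -> dotp (y - c) (u - c) <= 0.
  move=> Ku; apply: (nearest_point_obtuse c_min) => t /andP [t_gt0 t_le1].
  by apply/convn_caratheodory/convn_segment => //; rewrite ltW.
have [u Ku yu] := K_support (y - c).
suff /dotp_le0 /subr0_eq -> : dotp (y - c) (y - c) <= 0 by [].
have := obtuse u Ku; rewrite dotpBr (dotpC _ u) (dotpC _ c) dotpBl => uc.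
lra.
Qed.

End ConvexCombinations.

Section SpectralDecompositionSystem.
Variables (R : realType) (n p : nat) (G : Type).
Variables (mul : G -> G -> G) (one : G) (inv : G -> G).
Variables (act : G -> 'rV[R]_p -> 'rV[R]_p) (gamma : 'rV[R]_n -> 'rV[R]_p).
Variables (A : Type) (Lambda : A -> 'rV[R]_p -> 'rV[R]_n) (tau : 'rV[R]_p -> 'rV[R]_p).
Hypotheses (hG : is_group mul one inv) (hact : is_isometric_action mul one act).
Hypothesis Lambda_isometry : forall a, is_linear_isometry (Lambda a).
Hypothesis tau_act : forall s x, tau (act s x) = tau x.
Hypothesis tau_sorbit : forall x, sorbit act x (tau x).
Hypothesis gamma_Lambda : forall a x, gamma (Lambda a x) = tau x.
Hypothesis Lambda_gamma : forall X, exists a, X = Lambda a (gamma X).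
Hypothesis dotp_gamma : forall X Y, dotp X Y <= dotp (gamma X) (gamma Y).

Lemma dotp_le_tau x y : dotp x y <= dotp (tau x) (tau y).
Proof.
have [a _] := Lambda_gamma 0.
by rewrite -(linear_isometry_dotp (Lambda_isometry a)) -!(gamma_Lambda a).
Qed.

Lemma dotp_tau x : dotp (tau x) (tau x) = dotp x x.
Proof. exact: (sorbit_dotp hact (tau_sorbit x)). Qed.

Lemma sorbitE z :
  sorbit act z = [set k | dotp k k = dotp z z] `&`
                 \bigcap_(y in setT) [set k | dotp k y <= dotp (tau z) (tau y)].
Proof.
apply/seteqP; split=> [k z_k | k [/= kk_zz k_le_tau]].
  split; first exact: (sorbit_dotp hact z_k).
  by case: z_k => s -> y _; rewrite /= -(tau_act s z); exact: dotp_le_tau.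
have tau_eq : tau z = tau k.
  apply/eqP; rewrite -subr_eq0; apply/eqP/dotp_le0.
  have := k_le_tau k I; rewrite /= dotpBl !dotpBr !dotp_tau (dotpC (tau k)) => le_k.
  lra.
apply: (sorbit_trans hact (tau_sorbit z)).
by rewrite tau_eq; apply: (sorbit_sym hG hact (tau_sorbit k)).
Qed.

Lemma sorbit_compact z : compact (sorbit act z).
Proof.
rewrite sorbitE; apply: (@closed_dotp_bounded_compact _ _ _ (dotp z z)); last first.
  by move=> k [/= -> _].
apply: closedI.
  apply: (preimage_closed _ (@closed_eq R _)) => k _.
  by apply: continuous_dotp => x; exact: cvg_id.
apply: closed_bigI => y _; apply: (preimage_closed _ (@closed_le R _)) => k _.
by apply: continuous_dotp => x; [exact: cvg_id | exact: cst_continuous].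
Qed.

Lemma dotp_gamma_sum_le_orbit m (X : 'I_m -> 'rV[R]_n) (alpha : 'I_m -> R) :
  (forall i, 0 <= alpha i) ->
  forall w, exists2 k, sorbit act (\sum_i alpha i *: gamma (X i)) k &
    dotp (gamma (\sum_i alpha i *: X i)) w <= dotp k w.
Proof.
move=> alpha_ge0 w.
set z := \sum_i alpha i *: gamma (X i); set Y := \sum_i alpha i *: X i.
have [a Y_eq] := Lambda_gamma Y; have [t tau_w] := tau_sorbit w.
exists (act (inv t) z); first by exists (inv t).
apply: (@le_trans _ _ (dotp z (tau w))); last by rewrite tau_w (dotp_act_inv hG hact).
rewrite -(linear_isometry_dotp (Lambda_isometry a) (gamma Y)) -Y_eq !dotp_suml.
apply: ler_sum => i _; rewrite !dotpZl ler_wpM2l //.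
by rewrite -(gamma_Lambda a); exact: dotp_gamma.
Qed.

End SpectralDecompositionSystem.

Theorem theorem3p9 (R : realType) (n p : nat) (G : Type)
  (mul : G -> G -> G) (one : G) (inv : G -> G)
  (act : G -> 'rV[R]_p -> 'rV[R]_p) (gamma : 'rV[R]_n -> 'rV[R]_p)
  (A : Type) (Lambda : A -> 'rV[R]_p -> 'rV[R]_n)
  (hS : spectral_decomposition_system mul one inv act gamma Lambda)
  (m : nat) (hm : (1 <= m)%N) (X : 'I_m -> 'rV[R]_n) (alpha : 'I_m -> R)
  (halpha : forall i, 0 <= alpha i) :
  conv (sorbit act (\sum_(i < m) alpha i *: gamma (X i)))
       (gamma (\sum_(i < m) alpha i *: X i)).
Proof.
case: hS => hG hact _ [Lambda_isometry [tau [tau_act tau_sorbit gamma_Lambda]]].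
move=> Lambda_gamma dotp_gamma.
exists p.+1; apply: convn_of_support.
- exact: (sorbit_compact hG hact Lambda_isometry tau_act tau_sorbit gamma_Lambda
                         Lambda_gamma dotp_gamma).
- by exists (\sum_(i < m) alpha i *: gamma (X i)); exact: (sorbit_refl hact).
- exact: (dotp_gamma_sum_le_orbit hG hact Lambda_isometry tau_sorbit gamma_Lambda
                              Lambda_gamma dotp_gamma _ halpha).
Qed.
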